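(* Let $\mathbf{c}=\{c_n\}_{n=-\infty}^{\infty}$ be a complex sequence such that, for some $\theta_0\in[0,\pi/2)$, $c_n\pm c_{-n}\in K(\theta_0)$ for $n=1,2,\dots$, and suppose there exist a natural number $N_0$ and a constant $M(\mathbf c)>0$ with $$\sum_{n=m}^{2m}|c_n-c_{n+1}|\le M(\mathbf c)\max_{m\le n<m+N_0}|c_n|\qquad\text{for all } m=1,2,\dots.$$ Let $S_n(f,x)=\sum_{k=-n}^{n}c_ke^{ikx}$ and $f(x)=\lim_{n\to\infty}S_n(f,x)$ wherever this limit exists. If $\lim_{n\to\infty}\|f-S_n(f)\|=0$, then $\lim_{n\to\infty}nc_n=0$.
   Context: For $\theta\in[0,\pi/2]$, $K(\theta)=\{z\in\mathbb C: |\arg z|\le\theta\}$. $\|g\|=\sup_{x\in\mathbb R}|g(x)|$ for $2\pi$-periodic $g$. *)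

From Stdlib Require Import Reals ZArith List.
From Coquelicot Require Import Coquelicot.
Open Scope R_scope.

(* K(theta) = { z : |arg z| <= theta }; 0 is included (cone convention). *)
Definition inK (theta : R) (z : C) : Prop :=
  z = 0%C \/ exists a : R, Rabs a <= theta /\ z = (Cmod z * cos a, Cmod z * sin a)%R.

Definition cexpi (k : Z) (x : R) : C := (cos (IZR k * x), sin (IZR k * x)).

(* S_n(x) = sum_{k=-n}^{n} c_k e^{ikx}, reindexed k = j - n, j = 0..2n *)
Definition Spart (c : Z -> C) (n : nat) (x : R) : C :=
  sum_n (fun j : nat =>
           Cmult (c (Z.of_nat j - Z.of_nat n)%Z) (cexpi (Z.of_nat j - Z.of_nat n)%Z x))
        (2 * n).

Definition supnorm (g : R -> C) : Rbar :=
  Lub_Rbar (fun r => exists x : R, r = Cmod (g x)).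

Definition maxblock (c : Z -> C) (m N0 : nat) : R :=
  fold_right Rmax 0 (map (fun j : nat => Cmod (c (Z.of_nat (m + j)))) (seq 0 N0)).

Definition varblock (c : Z -> C) (m : nat) : R :=
  sum_n (fun j : nat => Cmod (Cminus (c (Z.of_nat (m + j))) (c (Z.of_nat (m + j + 1))))) m.

From Stdlib Require Import Reals ZArith List Lia Lra.
From Coquelicot Require Import Coquelicot.
Open Scope R_scope.

(* Put u_k(x) = c_k e^{ikx} + c_{-k} e^{-ikx}, so that S_n = c_0 + u_1 + ... + u_n and
   uniform convergence makes the blocks u_m + ... + u_{2m} uniformly small.  At x = 0 the
   real part of such a block is sum Re (c_k + c_{-k}) >= cos theta0 * sum |c_k + c_{-k}|,
   by the sector condition; at x = pi/(4m) every angle kx lies in [pi/4, pi/2], so the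
   imaginary part is at least cos theta0 / 2 * sum |c_k - c_{-k}| - sum |c_k + c_{-k}|.
   Hence sum_{k=m}^{2m} |c_k| -> 0.  The variation hypothesis gives
   |c_n| <= (1 + M) sum_{t<N0} |c_{j+t}| for every j in [n/2, n]; summing over these
   values of j bounds n |c_n| by 2 (1 + M) N0 max_{j >= n/2} sum_{k=j}^{2j} |c_k|. *)

Lemma sum_n_m_le_loc (a b : nat -> R) (n m : nat) :
  (forall k, (n <= k <= m)%nat -> a k <= b k) -> sum_n_m a n m <= sum_n_m b n m.
Proof.
  intros Hab.
  rewrite (sum_n_m_ext_loc a (fun k => Rmin (a k) (b k))).
  - apply sum_n_m_le; intros k; apply Rmin_r.
  - intros k Hk; rewrite Rmin_left; auto.
Qed.

Lemma sum_n_m_Rmult_l (a : R) (u : nat -> R) (n m : nat) :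
  sum_n_m (fun k => a * u k) n m = a * sum_n_m u n m.
Proof. exact (sum_n_m_mult_l a u n m). Qed.

Lemma sum_n_m_Rplus (u v : nat -> R) (n m : nat) :
  sum_n_m (fun k => u k + v k) n m = sum_n_m u n m + sum_n_m v n m.
Proof. exact (sum_n_m_plus u v n m). Qed.

Lemma sum_n_le_len (a : nat -> R) (p q : nat) :
  (forall k, 0 <= a k) -> (p <= q)%nat -> sum_n a p <= sum_n a q.
Proof.
  intros Ha Hpq; induction Hpq as [|q _ IH]; [lra|].
  rewrite sum_Sn; specialize (Ha (S q)); change plus with Rplus; lra.
Qed.

Lemma sum_n_m_shift {G : AbelianMonoid} (a : nat -> G) (m p : nat) :
  sum_n_m a m (m + p) = sum_n (fun i => a (m + i)%nat) p.
Proof.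
  induction p as [|p IH].
  - rewrite Nat.add_0_r, sum_n_n, sum_O, Nat.add_0_r; reflexivity.
  - rewrite Nat.add_succ_r, sum_n_Sm, IH, sum_Sn, Nat.add_succ_r by lia; reflexivity.
Qed.

Lemma sum_n_m_C (a : nat -> C) (n m : nat) :
  sum_n_m a n m = (sum_n_m (fun k => fst (a k)) n m, sum_n_m (fun k => snd (a k)) n m).
Proof.
  unfold sum_n_m, Iter.iter_nat; generalize (seq.iota n (S m - n)) as l.
  induction l as [|k l IH]; [reflexivity|]; cbn [Iter.iter]; rewrite IH; reflexivity.
Qed.

Lemma sum_n_m_nonneg (a : nat -> R) (n m : nat) :
  (forall k, 0 <= a k) -> 0 <= sum_n_m a n m.
Proof.
  intros Ha; apply Rle_trans with (sum_n_m (fun _ => 0) n m).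
  - rewrite sum_n_m_const; lra.
  - apply sum_n_m_le; exact Ha.
Qed.

Lemma fold_Rmax_le_sum_n (g : nat -> R) (s L : nat) :
  (forall i, 0 <= g i) ->
  fold_right Rmax 0 (map g (seq s (S L))) <= sum_n (fun t => g (s + t)%nat) L.
Proof.
  intros Hg; revert s; induction L as [|L IH]; intros s.
  - rewrite sum_O, Nat.add_0_r; simpl; apply Rmax_lub; [lra|apply Hg].
  - unfold sum_n; rewrite sum_Sn_m, <- sum_n_m_S, Nat.add_0_r by lia.
    rewrite (sum_n_m_ext _ (fun t => g (S s + t)%nat)) by (intros; f_equal; lia).
    specialize (IH (S s)); unfold sum_n in IH.
    pose proof (Hg s); pose proof (sum_n_m_nonneg (fun t => g (S s + t)%nat) 0 L (fun _ => Hg _)).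
    change (seq s (S (S L))) with (s :: seq (S s) (S L)); cbn [map fold_right].
    change plus with Rplus; apply Rmax_lub; lra.
Qed.

Lemma Rabs_fst_le_Cmod (z : C) : Rabs (fst z) <= Cmod z.
Proof. pose proof (Rmax_Cmod z); pose proof (Rmax_l (Rabs (fst z)) (Rabs (snd z))); lra. Qed.

Lemma Rabs_snd_le_Cmod (z : C) : Rabs (snd z) <= Cmod z.
Proof. pose proof (Rmax_Cmod z); pose proof (Rmax_r (Rabs (fst z)) (Rabs (snd z))); lra. Qed.

Lemma Cmod_le_plus_minus (p q : C) : 2 * Cmod p <= Cmod (p + q)%C + Cmod (p - q)%C.
Proof.
  replace (2 * Cmod p) with (Cmod ((p + q) + (p - q))%C).
  - apply Cmod_triangle.
  - replace ((p + q) + (p - q))%C with (RtoC 2 * p)%C.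
    + rewrite Cmod_mult, Cmod_R, Rabs_pos_eq; lra.
    + apply injective_projections; destruct p, q; simpl; ring.
Qed.

Lemma Cmod_le_of_supnorm_le (g : R -> C) (e x : R) :
  Rbar_le (supnorm g) (Finite e) -> Cmod (g x) <= e.
Proof.
  intros Hg; unfold supnorm in Hg.
  destruct (Lub_Rbar_correct (fun r => exists x, r = Cmod (g x))) as [Hub _].
  exact (Rbar_le_trans (Finite (Cmod (g x))) _ (Finite e) (Hub _ (ex_intro _ x eq_refl)) Hg).
Qed.

Lemma inK_cos_mul_Cmod_le (th : R) (z : C) :
  th <= PI -> inK th z -> cos th * Cmod z <= fst z.
Proof.
  intros Hth [->|[a [Ha Hz]]].
  - rewrite Cmod_0; simpl; lra.
  - assert (Hfst : fst z = Cmod z * cos a) by (rewrite Hz at 1; reflexivity).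
    assert (cos th <= cos a).
    { destruct (Rle_dec 0 a).
      - rewrite Rabs_pos_eq in Ha by lra; apply cos_decr_1; lra.
      - rewrite Rabs_left in Ha by lra; rewrite <- (cos_neg a); apply cos_decr_1; lra. }
    pose proof (Cmod_ge_0 z); nra.
Qed.

Lemma C_lim_0_of_Cmod (a : nat -> C) :
  (forall eps, 0 < eps -> exists N, forall n, (N <= n)%nat -> Cmod (a n) <= eps) ->
  filterlim a eventually (@locally C_UniformSpace (RtoC 0)).
Proof.
  intros Ha; apply filterlim_locally; intros [eps Heps].
  destruct (Ha (eps / 2)) as [N HN]; [lra|].
  exists N; intros n Hn; simpl.
  apply (@norm_compat1 C_AbsRing C_NormedModule).
  change (Cmod (a n - 0)%C < eps).
  replace (a n - 0)%C with (a n) by (apply injective_projections; simpl; ring).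
  specialize (HN n Hn); lra.
Qed.

Definition csym (c : Z -> C) (k : nat) : C := (c (Z.of_nat k) + c (- Z.of_nat k)%Z)%C.
Definition casym (c : Z -> C) (k : nat) : C := (c (Z.of_nat k) - c (- Z.of_nat k)%Z)%C.

Definition symterm (c : Z -> C) (k : nat) (x : R) : C :=
  (c (Z.of_nat k) * cexpi (Z.of_nat k) x + c (- Z.of_nat k)%Z * cexpi (- Z.of_nat k)%Z x)%C.

Lemma symterm_Re (c : Z -> C) (k : nat) (x : R) :
  fst (symterm c k x) = fst (csym c k) * cos (INR k * x) - snd (casym c k) * sin (INR k * x).
Proof.
  unfold symterm, csym, casym, cexpi.
  rewrite opp_IZR, <- INR_IZR_INZ, Ropp_mult_distr_l_reverse, cos_neg, sin_neg.
  destruct (c (Z.of_nat k)), (c (- Z.of_nat k)%Z); simpl; ring.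
Qed.

Lemma symterm_Im (c : Z -> C) (k : nat) (x : R) :
  snd (symterm c k x) = fst (casym c k) * sin (INR k * x) + snd (csym c k) * cos (INR k * x).
Proof.
  unfold symterm, csym, casym, cexpi.
  rewrite opp_IZR, <- INR_IZR_INZ, Ropp_mult_distr_l_reverse, cos_neg, sin_neg.
  destruct (c (Z.of_nat k)), (c (- Z.of_nat k)%Z); simpl; ring.
Qed.

Lemma Spart_S (c : Z -> C) (n : nat) (x : R) :
  Spart c (S n) x = (Spart c n x + symterm c (S n) x)%C.
Proof.
  unfold Spart, sum_n.
  replace (2 * S n)%nat with (S (S (2 * n))) by lia.
  rewrite sum_n_Sm, sum_Sn_m, <- sum_n_m_S by lia.
  rewrite (sum_n_m_ext _ (fun j : nat =>
     (c (Z.of_nat j - Z.of_nat n)%Z * cexpi (Z.of_nat j - Z.of_nat n)%Z x)%C)).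
  2:{ intros j; replace (Z.of_nat (S j) - Z.of_nat (S n))%Z
        with (Z.of_nat j - Z.of_nat n)%Z by lia; reflexivity. }
  replace (Z.of_nat 0 - Z.of_nat (S n))%Z with (- Z.of_nat (S n))%Z by lia.
  replace (Z.of_nat (S (S (2 * n))) - Z.of_nat (S n))%Z with (Z.of_nat (S n)) by lia.
  unfold symterm; change plus with Cplus.
  set (S0 := sum_n_m _ 0 (2 * n)).
  apply injective_projections; simpl; ring.
Qed.

Lemma Spart_add (c : Z -> C) (m p : nat) (x : R) :
  Spart c (m + p) x = (Spart c m x + sum_n_m (fun k => symterm c k x) (S m) (m + p))%C.
Proof.
  induction p as [|p IH].
  - rewrite Nat.add_0_r, sum_n_m_zero by lia.
    apply injective_projections; simpl; ring.
  - rewrite Nat.add_succ_r, Spart_S, IH, sum_n_Sm by lia.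
    change plus with Cplus; apply injective_projections; simpl; ring.
Qed.

Section SectorCoefficients.

Variables (c : Z -> C) (th : R).
Hypothesis Hth : 0 <= th < PI / 2.
Hypothesis HK : forall n : nat, (1 <= n)%nat -> inK th (csym c n) /\ inK th (casym c n).

Let cos_th_pos : 0 < cos th.
Proof. apply cos_gt_0; lra. Qed.

Lemma sum_csym_le_Re (m n : nat) : (1 <= m)%nat ->
  cos th * sum_n_m (fun k => Cmod (csym c k)) m n
  <= fst (sum_n_m (fun k => symterm c k 0) m n).
Proof.
  intros Hm; rewrite sum_n_m_C, <- sum_n_m_Rmult_l; cbn [fst].
  apply sum_n_m_le_loc; intros k Hk.
  rewrite symterm_Re, Rmult_0_r, cos_0, sin_0.
  pose proof (inK_cos_mul_Cmod_le th (csym c k) ltac:(lra) (proj1 (HK k ltac:(lia)))).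
  lra.
Qed.

Lemma sum_casym_le_Im (m : nat) : (1 <= m)%nat ->
  cos th / 2 * sum_n_m (fun k => Cmod (casym c k)) m (2 * m)
  <= snd (sum_n_m (fun k => symterm c k (PI / (4 * INR m))) m (2 * m))
     + sum_n_m (fun k => Cmod (csym c k)) m (2 * m).
Proof.
  intros Hm; rewrite sum_n_m_C; cbn [snd]; rewrite <- sum_n_m_Rmult_l, <- sum_n_m_Rplus.
  apply sum_n_m_le_loc; intros k Hk.
  rewrite symterm_Im; set (y := INR k * (PI / (4 * INR m))).
  assert (Hy : PI / 4 <= y <= PI / 2).
  { assert (0 < INR m) by (apply lt_0_INR; lia).
    assert (INR m <= INR k <= 2 * INR m).
    { rewrite <- (mult_INR 2); split; apply le_INR; lia. }
    assert (y * (4 * INR m) = INR k * PI) by (unfold y; field; lra).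
    pose proof PI_RGT_0; split; nra. }
  pose proof PI_RGT_0.
  assert (Hsin : 1 / 2 <= sin y) by (rewrite <- sin_PI6; apply sin_incr_1; lra).
  assert (Hcos : 0 <= cos y <= 1) by (split; [apply cos_ge_0|apply COS_bound]; lra).
  pose proof (inK_cos_mul_Cmod_le th (casym c k) ltac:(lra) (proj2 (HK k ltac:(lia)))).
  pose proof (Rabs_snd_le_Cmod (csym c k)) as HA; apply Rabs_le_between in HA.
  pose proof (Cmod_ge_0 (casym c k)); pose proof (Cmod_ge_0 (csym c k)).
  pose proof cos_th_pos.
  assert (0 <= fst (casym c k)) by nra.
  assert (fst (casym c k) / 2 <= fst (casym c k) * sin y) by nra.
  assert (- Cmod (csym c k) <= snd (csym c k) * cos y) by nra.
  lra.
Qed.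

Lemma sum_Cmod_block_le (m : nat) (e : R) : (1 <= m)%nat ->
  (forall x, Cmod (sum_n_m (fun k => symterm c k x) m (2 * m)) <= e) ->
  sum_n_m (fun k => Cmod (c (Z.of_nat k))) m (2 * m) <= 3 / cos th ^ 2 * e.
Proof.
  intros Hm Hosc.
  set (SA := sum_n_m (fun k => Cmod (csym c k)) m (2 * m)).
  set (SB := sum_n_m (fun k => Cmod (casym c k)) m (2 * m)).
  set (g := cos th).
  assert (HA : g * SA <= e).
  { eapply Rle_trans; [apply sum_csym_le_Re; exact Hm|].
    eapply Rle_trans; [apply Rle_abs|].
    eapply Rle_trans; [apply Rabs_fst_le_Cmod|apply Hosc]. }
  assert (HB : g / 2 * SB <= e + SA).
  { eapply Rle_trans; [apply sum_casym_le_Im; exact Hm|].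
    apply Rplus_le_compat_r.
    eapply Rle_trans; [apply Rle_abs|].
    eapply Rle_trans; [apply Rabs_snd_le_Cmod|apply Hosc]. }
  assert (HC : 2 * sum_n_m (fun k => Cmod (c (Z.of_nat k))) m (2 * m) <= SA + SB).
  { unfold SA, SB; rewrite <- sum_n_m_Rmult_l, <- sum_n_m_Rplus.
    apply sum_n_m_le; intros k; apply Cmod_le_plus_minus. }
  assert (Hg : 0 < g <= 1) by (split; [exact cos_th_pos|apply COS_bound]).
  assert (HSA : 0 <= SA) by (apply sum_n_m_nonneg; intros; apply Cmod_ge_0).
  assert (HgSA : 0 <= g * SA) by nra.
  assert (g ^ 2 * SA <= e) by nra.
  assert (g ^ 2 * SB <= 2 * g * (e + SA)) by nra.
  assert (g * e <= e) by nra.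
  apply (Rmult_le_reg_l (g ^ 2)); [nra|].
  replace (g ^ 2 * (3 / g ^ 2 * e)) with (3 * e) by (field; lra).
  nra.
Qed.

Lemma sum_Cmod_block_le_of_unif (f : R -> C) (N : nat) (e : R)
  (HN : forall n, (N <= n)%nat -> forall x, Cmod (f x - Spart c n x)%C <= e)
  (m p : nat) : (N < m)%nat -> (p <= m)%nat ->
  sum_n (fun i => Cmod (c (Z.of_nat (m + i)))) p <= 6 / cos th ^ 2 * e.
Proof.
  intros Hm Hp.
  apply Rle_trans with (sum_n_m (fun k => Cmod (c (Z.of_nat k))) m (2 * m)).
  { replace (2 * m)%nat with (m + m)%nat by lia; rewrite sum_n_m_shift.
    apply sum_n_le_len; [intros; apply Cmod_ge_0|exact Hp]. }
  replace (6 / cos th ^ 2 * e) with (3 / cos th ^ 2 * (2 * e))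
    by (field; apply Rgt_not_eq, cos_th_pos).
  apply sum_Cmod_block_le; [lia|]; intros x.
  destruct m as [|m]; [lia|].
  replace (2 * S m)%nat with (m + S (S m))%nat by lia.
  replace (sum_n_m _ _ _)
    with ((f x - Spart c m x) - (f x - Spart c (m + S (S m)) x))%C
    by (rewrite Spart_add; apply injective_projections; simpl; ring).
  eapply Rle_trans; [apply Cmod_triangle|]; rewrite Cmod_opp.
  pose proof (HN m ltac:(lia) x); pose proof (HN (m + S (S m))%nat ltac:(lia) x); lra.
Qed.

End SectorCoefficients.

Lemma Cmod_le_Cmod_add_sub (u v : C) : Cmod v <= Cmod u + Cmod (u - v)%C.
Proof.
  replace v with (u + - (u - v))%C at 1
    by (apply injective_projections; destruct u, v; simpl; ring).
  eapply Rle_trans; [apply Cmod_triangle|]; rewrite Cmod_opp; lra.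
Qed.

Lemma Cmod_S_le_add_var (a : nat -> C) (i : nat) :
  Cmod (a (S i)) <= Cmod (a O) + sum_n (fun j => Cmod (a j - a (S j))%C) i.
Proof.
  induction i as [|i IH].
  - rewrite sum_O; apply Cmod_le_Cmod_add_sub.
  - rewrite sum_Sn; change plus with Rplus.
    pose proof (Cmod_le_Cmod_add_sub (a (S i)) (a (S (S i)))); lra.
Qed.

Section BoundedVariation.

Variables (c : Z -> C) (N1 : nat) (M : R).
Hypothesis HM : 0 <= M.
Hypothesis Hvar : forall m : nat, (1 <= m)%nat -> varblock c m <= M * maxblock c m (S N1).

Lemma Cmod_le_block_sum (m i : nat) : (1 <= m)%nat -> (i <= m)%nat ->
  Cmod (c (Z.of_nat (m + i))) <= (1 + M) * sum_n (fun t => Cmod (c (Z.of_nat (m + t)))) N1.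
Proof.
  intros Hm Hi.
  assert (Hmax : maxblock c m (S N1) <= sum_n (fun t => Cmod (c (Z.of_nat (m + t)))) N1)
    by exact (fold_Rmax_le_sum_n (fun j => Cmod (c (Z.of_nat (m + j)))) 0 N1
                (fun _ => Cmod_ge_0 _)).
  assert (Hfirst : Cmod (c (Z.of_nat m)) <= maxblock c m (S N1)).
  { unfold maxblock; cbn [seq map fold_right]; rewrite Nat.add_0_r; apply Rmax_l. }
  pose proof (Cmod_ge_0 (c (Z.of_nat m))).
  apply Rle_trans with ((1 + M) * maxblock c m (S N1)); [|apply Rmult_le_compat_l; lra].
  destruct i as [|i].
  - rewrite Nat.add_0_r; nra.
  - pose proof (Cmod_S_le_add_var (fun j => c (Z.of_nat (m + j))) i) as Htel.
    cbv beta in Htel; rewrite Nat.add_0_r in Htel.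
    assert (sum_n (fun j => Cmod (c (Z.of_nat (m + j)) - c (Z.of_nat (m + S j)))%C) i
            <= varblock c m).
    { unfold varblock.
      rewrite (sum_n_ext (fun j => Cmod (c (Z.of_nat (m + j)) - c (Z.of_nat (m + j + 1)))%C)
                 (fun j => Cmod (c (Z.of_nat (m + j)) - c (Z.of_nat (m + S j)))%C))
        by (intros j; rewrite Nat.add_1_r, Nat.add_succ_r; reflexivity).
      apply sum_n_le_len; [intros; apply Cmod_ge_0|lia]. }
    specialize (Hvar m Hm); lra.
Qed.

Lemma INR_mul_Cmod_le_of_blocks (N : nat) (B : R)
  (Hblock : forall m p, (N < m)%nat -> (p <= m)%nat ->
            sum_n (fun i => Cmod (c (Z.of_nat (m + i)))) p <= B)
  (n : nat) : (2 * N + 2 <= n)%nat ->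
  INR n * Cmod (c (Z.of_nat n)) <= 2 * (1 + M) * INR (S N1) * B.
Proof.
  intros Hn.
  set (w := fun j : nat => Cmod (c (Z.of_nat j))); change (Cmod (c (Z.of_nat n))) with (w n).
  assert (Hp : exists p, (N < n - p /\ p <= n - p /\ n <= 2 * p + 1)%nat).
  { destruct (Nat.Even_or_Odd n) as [[p Hp]|[p Hp]]; exists p; lia. }
  destruct Hp as [p (HNh & Hph & Hnp)]; set (h := (n - p)%nat) in *.
  assert (Hcount : INR (S p) * w n <= (1 + M) * (INR (S N1) * B)).
  { rewrite <- sum_n_const.
    apply Rle_trans with (sum_n (fun i => (1 + M) * sum_n (fun t => w (h + i + t)%nat) N1) p).
    { apply sum_n_m_le_loc; intros i Hi.
      replace n with (h + i + (n - (h + i)))%nat at 1 by lia.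
      apply Cmod_le_block_sum; lia. }
    unfold sum_n at 1; rewrite sum_n_m_Rmult_l; apply Rmult_le_compat_l; [lra|].
    change (sum_n_m ?a 0 p) with (sum_n a p).
    rewrite (sum_n_switch (fun i t => w (h + i + t)%nat)), <- sum_n_const.
    apply sum_n_m_le_loc; intros t Ht.
    rewrite (sum_n_ext _ (fun i => w (h + t + i)%nat)) by (intros; f_equal; lia).
    apply Hblock; lia. }
  assert (Hn2 : INR n <= 2 * INR (S p)).
  { rewrite <- (mult_INR 2); apply le_INR; lia. }
  assert (0 <= w n) by apply Cmod_ge_0.
  assert (INR n * w n <= 2 * INR (S p) * w n) by (apply Rmult_le_compat_r; lra).
  lra.
Qed.

End BoundedVariation.

Theorem lemma2 (c : Z -> C) (theta0 : R)
  (Htheta : 0 <= theta0 < PI / 2)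
  (HK : forall n : nat, (1 <= n)%nat ->
        inK theta0 (Cplus (c (Z.of_nat n)) (c (- Z.of_nat n)%Z)) /\
        inK theta0 (Cminus (c (Z.of_nat n)) (c (- Z.of_nat n)%Z)))
  (N0 : nat) (HN0 : (1 <= N0)%nat) (M : R) (HM : 0 < M)
  (Hvar : forall m : nat, (1 <= m)%nat -> varblock c m <= M * maxblock c m N0)
  (f : R -> C)
  (Hf : forall (x : R) (l : C),
        filterlim (fun n : nat => Spart c n x) eventually (locally l) -> f x = l)
  (Hunif : forall eps : R, 0 < eps -> exists N : nat, forall n : nat, (N <= n)%nat ->
        Rbar_le (supnorm (fun x => Cminus (f x) (Spart c n x))) (Finite eps)) :
  filterlim (fun n : nat => Cmult (RtoC (INR n)) (c (Z.of_nat n))) eventually (@locally C_UniformSpace (RtoC 0)).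
Proof.
  destruct N0 as [|N1]; [lia|].
  apply C_lim_0_of_Cmod; intros eps Heps.
  assert (Hg : 0 < cos theta0) by (apply cos_gt_0; pose proof PI_RGT_0; lra).
  set (K := 2 * (1 + M) * INR (S N1) * (6 / cos theta0 ^ 2)).
  assert (HN1 : 0 < INR (S N1)) by (apply lt_0_INR; lia).
  assert (HK0 : 0 < K).
  { assert (0 < 6 / cos theta0 ^ 2) by (apply Rdiv_lt_0_compat; [lra|apply pow_lt; lra]).
    unfold K; repeat apply Rmult_lt_0_compat; lra. }
  destruct (Hunif (eps / K)) as [N HN]; [apply Rdiv_lt_0_compat; lra|].
  exists (2 * N + 2)%nat; intros n Hn.
  rewrite Cmod_mult, Cmod_R, Rabs_pos_eq by apply pos_INR.
  eapply Rle_trans.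
  - apply (INR_mul_Cmod_le_of_blocks c N1 M (Rlt_le _ _ HM) Hvar N
             (6 / cos theta0 ^ 2 * (eps / K))); [|exact Hn].
    intros m p Hm Hp.
    apply (sum_Cmod_block_le_of_unif c theta0 Htheta HK f N); [|exact Hm|exact Hp].
    intros k Hk x; exact (Cmod_le_of_supnorm_le (fun x => (f x - Spart c k x)%C) _ x (HN k Hk)).
  - right; unfold K; field; repeat split; apply Rgt_not_eq; lra.
Qed.
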